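(* Every tree (in which every nontrivial pseudo-supremum is a supremum) that is collectionwise Hausdorff in the interval topology is countably metacompact.
   Context: A tree is a partially ordered set in which the set of predecessors of each element is well-ordered. For a nonempty chain bounded above, its pseudo-supremum is the set of its minimal upper bounds; standing assumption: each such set is a singleton. The interval topology has as base all sets $(s,t]=\{x:s<x\le t\}$ together with all singletons $\{t\}$ with $t$ minimal. A space is collectionwise Hausdorff if every closed discrete subset $D$ can be expanded to a pairwise disjoint family of open sets $\{U_d:d\in D\}$ with $d\in U_d$. A space is countably metacompact if every countable open cover has a point-finite open refinement. *)

From Stdlib Require Import List.
Set Implicit Arguments.

Section Trees.
Variable T : Type.
Variable le : T -> T -> Prop.

Definition lt (x y : T) : Prop := le x y /\ x <> y.

Definition partial_order : Prop :=
  (forall x, le x x) /\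
  (forall x y, le x y -> le y x -> x = y) /\
  (forall x y z, le x y -> le y z -> le x z).

Definition well_ordered (S : T -> Prop) : Prop :=
  (forall x y, S x -> S y -> le x y \/ le y x) /\
  (forall A : T -> Prop, (forall x, A x -> S x) -> (exists x, A x) ->
     exists m, A m /\ forall x, A x -> le m x).

Definition is_tree : Prop :=
  partial_order /\ forall t, well_ordered (fun s => lt s t).

Definition chain (C : T -> Prop) : Prop :=
  forall x y, C x -> C y -> le x y \/ le y x.

Definition upper_bound (C : T -> Prop) (u : T) : Prop :=
  forall c, C c -> le c u.

Definition minimal_upper_bound (C : T -> Prop) (u : T) : Prop :=
  upper_bound C u /\ forall v, upper_bound C v -> le v u -> v = u.

(* Standing assumption: for every nonempty chain bounded above, its
   pseudo-supremum (set of minimal upper bounds) is a singleton. *)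
Definition pseudo_suprema_singletons : Prop :=
  forall C : T -> Prop, chain C -> (exists c, C c) -> (exists b, upper_bound C b) ->
    exists u, forall v, minimal_upper_bound C v <-> v = u.

Definition minimal (t : T) : Prop := forall s, le s t -> s = t.

Definition interval_base (B : T -> Prop) : Prop :=
  (exists s t, forall y, B y <-> (lt s y /\ le y t)) \/
  (exists t, minimal t /\ forall y, B y <-> y = t).

Definition interval_open (U : T -> Prop) : Prop :=
  forall x, U x -> exists B, interval_base B /\ B x /\ (forall y, B y -> U y).

End Trees.

Section Topology.
Variable T : Type.
Variable open : (T -> Prop) -> Prop.

Definition closed (F : T -> Prop) : Prop := open (fun x => ~ F x).

Definition closed_discrete (D : T -> Prop) : Prop :=
  closed D /\
  forall d, D d -> exists U, open U /\ U d /\ (forall y, U y -> D y -> y = d).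

Definition collectionwise_hausdorff : Prop :=
  forall D, closed_discrete D ->
    exists U : T -> (T -> Prop),
      (forall d, D d -> open (U d) /\ U d d) /\
      (forall d d', D d -> D d' -> d <> d' -> forall x, U d x -> U d' x -> False).

(* countable open cover, indexed by nat (repetitions allowed) *)
Definition countable_open_cover (W : nat -> (T -> Prop)) : Prop :=
  (forall n, open (W n)) /\ (forall x, exists n, W n x).

Definition point_finite_open_refinement (W : nat -> (T -> Prop))
  (R : (T -> Prop) -> Prop) : Prop :=
  (forall V, R V -> open V) /\
  (forall x, exists V, R V /\ V x) /\
  (forall V, R V -> exists n, forall y, V y -> W n y) /\
  (forall x, exists l : list (T -> Prop), forall V, R V -> V x -> In V l).

Definition countably_metacompact : Prop :=
  forall W, countable_open_cover W ->
    exists R, point_finite_open_refinement W R.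

End Topology.

From Stdlib Require Import List Arith Lia Classical IndefiniteDescription
  FunctionalExtensionality PropExtensionality.

(* Let [idx x] be the least [n] with [x] in [W n]. Since [W (idx y)] is open,
   [idx <= idx y] on a left neighbourhood (s, y] of every [y], so by
   well-founded induction [idx] is bounded on the predecessors of each point.
   Let [left_bound y] be the least strict bound of [idx] on a punctured left
   neighbourhood of [y]. For fixed [j] and [K], the points [y] with
   [left_bound y = j <= idx y] whose predecessors of index at least [j] form
   exactly [K] are pairwise incomparable, hence closed discrete, and
   collectionwise Hausdorffness separates them by disjoint open sets. Each [y]
   gets an interval (foot y, y] inside [W (idx y)] and inside its separating
   set, with [left_bound y <= idx (foot y) + 1]. If [x] lies in (foot y, y)
   and [left_bound y <= idx y], then [K] is determined by [x] and [j], so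
   there is at most one such [y] per [j], and [j] is bounded by the bound of
   [idx] below [x]; for the other [y] containing [x], [idx y] is bounded
   directly. Grouping the intervals by [idx y] gives a point-finite
   refinement. *)

Lemma least_nat (P : nat -> Prop) :
  (exists n, P n) -> {n | P n /\ forall m, P m -> n <= m}.
Proof.
  intro HP. apply constructive_indefinite_description.
  destruct (dec_inh_nat_subset_has_unique_least_element P (fun n => classic (P n)) HP)
    as [n [Hn _]].
  now exists n.
Qed.

Lemma bounded_of_injective (A : Type) (P : A -> Prop) (f g : A -> nat) :
  (forall a b, P a -> P b -> g a = g b -> a = b) ->
  forall J, exists B, forall a, P a -> g a < J -> f a <= B.
Proof.
  intros Hinj J. induction J as [|J [B HB]].
  - exists 0. intros a _ HJ. lia.
  - destruct (classic (exists a0, P a0 /\ g a0 = J)) as [[a0 [Ha0 Ea0]]|Hnone].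
    + exists (Nat.max B (f a0)). intros a Ha HJ.
      destruct (Nat.eq_dec (g a) J) as [E|E].
      * rewrite (Hinj a a0 Ha Ha0 ltac:(lia)). lia.
      * specialize (HB a Ha ltac:(lia)). lia.
    + exists B. intros a Ha HJ. apply HB; auto.
      destruct (Nat.eq_dec (g a) J) as [E|E]; [exfalso; eauto|lia].
Qed.

Section Tree.
Variable T : Type.
Variable le : T -> T -> Prop.
Hypothesis Htree : is_tree le.

Local Notation "x <=. y" := (le x y) (at level 70).
Local Notation "x <. y" := (lt le x y) (at level 70).

Lemma le_refl x : x <=. x.
Proof. destruct Htree as [[H _] _]; auto. Qed.
Lemma le_antisym x y : x <=. y -> y <=. x -> x = y.
Proof. destruct Htree as [[_ [H _]] _]; eauto. Qed.
Lemma le_trans x y z : x <=. y -> y <=. z -> x <=. z.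
Proof. destruct Htree as [[_ [_ H]] _]; eauto. Qed.

Lemma lt_le_trans a b c : a <. b -> b <=. c -> a <. c.
Proof.
  intros [Hab Hne] Hbc. split; [eapply le_trans; eauto|].
  intros ->. apply Hne, le_antisym; auto.
Qed.

Lemma le_lt_trans a b c : a <=. b -> b <. c -> a <. c.
Proof.
  intros Hab [Hbc Hne]. split; [eapply le_trans; eauto|].
  intros ->. apply Hne, le_antisym; auto.
Qed.

Lemma lt_irrefl a : ~ a <. a.
Proof. intros [_ H]; auto. Qed.

Lemma le_lt_cases_below t a b : a <. t -> b <. t -> a <=. b \/ b <. a.
Proof.
  intros Ha Hb. destruct Htree as [_ Hwo]. destruct (Hwo t) as [Htot _].
  destruct (Htot a b Ha Hb) as [Hab|Hba]; auto.
  destruct (classic (a = b)) as [->|Hne]; [left; apply le_refl|right; split; auto].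
Qed.

Lemma le_lt_cases_le t a b : a <=. t -> b <. t -> a <=. b \/ b <. a.
Proof.
  intros Ha Hb. destruct (classic (a = t)) as [->|Hne]; [right; exact Hb|].
  exact (le_lt_cases_below t a b (conj Ha Hne) Hb).
Qed.

Lemma lt_well_founded : well_founded (lt le).
Proof.
  intro t. apply NNPP. intro Hacc.
  destruct Htree as [_ Hwo]. destruct (Hwo t) as [_ Hleast].
  destruct (Hleast (fun s => s <. t /\ ~ Acc (lt le) s)) as [m [[Hmt Hm] Hmin]].
  - intros s []; assumption.
  - apply NNPP. intro Hall. apply Hacc. constructor. intros s Hs.
    apply NNPP. intro Hs'. apply Hall. eauto.
  - apply Hm. constructor. intros s Hsm. apply NNPP. intro Hs.
    assert (Hms : m <=. s) by (apply Hmin; split; [eapply lt_le_trans; [exact Hsm|apply Hmt]|auto]).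
    exact (lt_irrefl s (lt_le_trans s m s Hsm Hms)).
Qed.

Lemma minimal_not_lt y s : minimal le y -> ~ s <. y.
Proof. intros Hy [Hsy Hne]. exact (Hne (Hy s Hsy)). Qed.

Lemma not_minimal_lt y : ~ minimal le y -> exists s, s <. y.
Proof.
  intro Hy. apply NNPP. intro Hnone. apply Hy. intros s Hsy.
  apply NNPP. intro Hne. apply Hnone. exists s. split; auto.
Qed.

Lemma interval_open_Ioc s t : interval_open le (fun z => s <. z /\ z <=. t).
Proof. intros x Hx. exists (fun z => s <. z /\ z <=. t). split; auto. left. now exists s, t. Qed.

Lemma interval_open_minimal t : minimal le t -> interval_open le (fun z => z = t).
Proof. intros Ht x Hx. exists (fun z => z = t). split; auto. right. now exists t. Qed.

Lemma exists_open_below x :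
  exists U, interval_open le U /\ U x /\ forall z, U z -> z <=. x.
Proof.
  destruct (classic (minimal le x)) as [Hx|Hx].
  - exists (fun z => z = x). split; [now apply interval_open_minimal|].
    split; [reflexivity|]. intros z ->. apply le_refl.
  - destruct (not_minimal_lt x Hx) as [s Hs].
    exists (fun z => s <. z /\ z <=. x). split; [apply interval_open_Ioc|].
    split; [split; [exact Hs|apply le_refl]|]. intros z []; assumption.
Qed.

Lemma antichain_locally_single (D : T -> Prop) :
  (forall a b, D a -> D b -> a <=. b -> a = b) ->
  forall x, exists U, interval_open le U /\ U x /\ forall z, U z -> D z -> z = x.
Proof.
  intros HD x. destruct (classic (exists d, D d /\ d <. x)) as [[d [Dd Hdx]]|Hnone].
  - exists (fun z => d <. z /\ z <=. x). split; [apply interval_open_Ioc|].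
    split; [split; [exact Hdx|apply le_refl]|].
    intros z [Hdz _] Dz. exfalso. apply (proj2 Hdz). apply HD; auto. apply Hdz.
  - destruct (exists_open_below x) as [U [HU [Ux Hbelow]]].
    exists U. split; [exact HU|split; [exact Ux|]].
    intros z Uz Dz. apply NNPP. intro Hne. apply Hnone. exists z. split; auto.
    split; auto.
Qed.

Lemma antichain_closed_discrete (D : T -> Prop) :
  (forall a b, D a -> D b -> a <=. b -> a = b) -> closed_discrete (interval_open le) D.
Proof.
  intro HD. split.
  - intros x Hx. destruct (antichain_locally_single D HD x) as [U [HU [Ux Hsingle]]].
    destruct (HU x Ux) as [B [HB [Bx BU]]]. exists B. split; [exact HB|split; [exact Bx|]].
    intros z Bz Dz. apply Hx. rewrite <- (Hsingle z (BU z Bz) Dz). exact Dz.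
  - intros d _. exact (antichain_locally_single D HD d).
Qed.

Definition near (y : T) (Q : T -> Prop) : Prop :=
  (minimal le y /\ Q y) \/ exists s, s <. y /\ forall z, s <. z -> z <=. y -> Q z.

Lemma near_mono y (Q Q' : T -> Prop) : (forall z, Q z -> Q' z) -> near y Q -> near y Q'.
Proof.
  intros HQ [[Hy Qy]|[s [Hs HQs]]]; [left; auto|right; exists s; auto].
Qed.

Lemma near_and y (Q Q' : T -> Prop) : near y Q -> near y Q' -> near y (fun z => Q z /\ Q' z).
Proof.
  intros [[Hy Qy]|[s [Hs HQs]]] [[Hy' Qy']|[s' [Hs' HQs']]].
  - left; auto.
  - exfalso. exact (minimal_not_lt y s' Hy Hs').
  - exfalso. exact (minimal_not_lt y s Hy' Hs).
  - right. destruct (le_lt_cases_below y s s' Hs Hs') as [Hss'|Hs's].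
    + exists s'. split; [exact Hs'|]. intros z Hz Hzy.
      split; [apply HQs; [eapply le_lt_trans; eauto|]|apply HQs']; auto.
    + exists s. split; [exact Hs|]. intros z Hz Hzy.
      split; [apply HQs|apply HQs'; [eapply lt_le_trans; [exact Hs's|apply Hz]|]]; auto.
Qed.

Lemma open_near U y : interval_open le U -> U y -> near y U.
Proof.
  intros HU Uy. destruct (HU y Uy) as [B [[[s [t HB]]|[t [Ht HB]]] [By BU]]].
  - right. exists s. apply HB in By. destruct By as [Hsy Hyt]. split; [exact Hsy|].
    intros z Hsz Hzy. apply BU, HB. split; [exact Hsz|eapply le_trans; eauto].
  - apply HB in By. subst t. left. auto.
Qed.

Lemma near_le_bounded (f : T -> nat) :
  (forall y, near y (fun z => f z <= f y)) ->
  forall x, exists K, forall z, z <=. x -> f z <= K.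
Proof.
  intros Hf x. induction (lt_well_founded x) as [x _ IH].
  destruct (Hf x) as [[Hx _]|[s [Hsx Hs]]].
  - exists (f x). intros z Hzx. rewrite (Hx z Hzx). lia.
  - destruct (IH s Hsx) as [K HK]. exists (Nat.max K (f x)). intros z Hzx.
    destruct (le_lt_cases_le x z s Hzx Hsx) as [Hzs|Hsz].
    + specialize (HK z Hzs). lia.
    + specialize (Hs z Hsz Hzx). lia.
Qed.

Section Cover.
Variable W : nat -> T -> Prop.
Hypothesis HWo : forall n, interval_open le (W n).
Hypothesis HWc : forall x, exists n, W n x.
Hypothesis HC : collectionwise_hausdorff (interval_open le).

Definition idx (x : T) : nat := proj1_sig (least_nat _ (HWc x)).

Lemma W_idx x : W (idx x) x.
Proof. exact (proj1 (proj2_sig (least_nat _ (HWc x)))). Qed.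

Lemma idx_le x n : W n x -> idx x <= n.
Proof. exact (proj2 (proj2_sig (least_nat _ (HWc x))) n). Qed.

Lemma near_W_idx y : near y (W (idx y)).
Proof. exact (open_near _ _ (HWo _) (W_idx y)). Qed.

Lemma idx_bounded_below x : exists K, forall z, z <=. x -> idx z <= K.
Proof.
  apply near_le_bounded. intro y.
  exact (near_mono y _ _ (fun z => idx_le z (idx y)) (near_W_idx y)).
Qed.

Definition bounds_left (y : T) (j : nat) : Prop := near y (fun z => z <. y -> idx z < j).

Lemma bounds_left_ex y : exists j, bounds_left y j.
Proof.
  exists (S (idx y)). apply (near_mono y (W (idx y))); [|apply near_W_idx].
  intros z Wz _. specialize (idx_le z _ Wz). lia.
Qed.

(* One more than the upper limit of [idx] from the left of [y]; it is 0 when [y]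
   is minimal or has an immediate predecessor. *)
Definition left_bound (y : T) : nat := proj1_sig (least_nat _ (bounds_left_ex y)).

Lemma bounds_left_left_bound y : bounds_left y (left_bound y).
Proof. exact (proj1 (proj2_sig (least_nat _ (bounds_left_ex y)))). Qed.

Lemma left_bound_le y j : bounds_left y j -> left_bound y <= j.
Proof. exact (proj2 (proj2_sig (least_nat _ (bounds_left_ex y))) j). Qed.

Definition high_preds (x : T) (j : nat) (z : T) : Prop := z <. x /\ j <= idx z.

Definition layer (j : nat) (K : T -> Prop) (y : T) : Prop :=
  left_bound y = j /\ j <= idx y /\ high_preds y j = K.

Lemma layer_antichain j K a b : layer j K a -> layer j K b -> a <=. b -> a = b.
Proof.
  intros [_ [Hja Ea]] [_ [_ Eb]] Hab. apply NNPP. intro Hne.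
  assert (Ka : K a) by (rewrite <- Eb; split; [split|]; auto).
  rewrite <- Ea in Ka. exact (lt_irrefl a (proj1 Ka)).
Qed.

Definition sep (j : nat) (K : T -> Prop) : T -> T -> Prop :=
  proj1_sig (constructive_indefinite_description _
    (HC (layer j K) (antichain_closed_discrete (layer j K) (layer_antichain j K)))).

Lemma sep_open j K y : layer j K y -> interval_open le (sep j K y) /\ sep j K y y.
Proof.
  exact (proj1 (proj2_sig (constructive_indefinite_description _
    (HC (layer j K) (antichain_closed_discrete (layer j K) (layer_antichain j K)))))
    y).
Qed.

Lemma sep_disjoint j K y y' x :
  layer j K y -> layer j K y' -> sep j K y x -> sep j K y' x -> y = y'.
Proof.
  intros Hy Hy' Sx Sx'. apply NNPP. intro Hne.
  exact (proj2 (proj2_sig (constructive_indefinite_description _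
    (HC (layer j K) (antichain_closed_discrete (layer j K) (layer_antichain j K)))))
    y y' Hy Hy' Hne x Sx Sx').
Qed.

Definition foot_cond (y z : T) : Prop :=
  W (idx y) z /\ (z <. y -> idx z < left_bound y) /\
  (left_bound y <= idx y -> sep (left_bound y) (high_preds y (left_bound y)) y z).

Lemma near_foot_cond y : near y (foot_cond y).
Proof.
  apply near_and; [apply near_W_idx|]. apply near_and; [apply bounds_left_left_bound|].
  destruct (classic (left_bound y <= idx y)) as [Hj|Hj].
  - assert (Hlayer : layer (left_bound y) (high_preds y (left_bound y)) y)
      by (repeat split; auto).
    destruct (sep_open _ _ _ Hlayer) as [Ho Hy].
    exact (near_mono y _ _ (fun z Hz _ => Hz) (open_near _ _ Ho Hy)).
  - apply (near_mono y (W (idx y))); [intros z _ Hj'; contradiction|apply near_W_idx].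
Qed.

(* By minimality of [left_bound y], every punctured left neighbourhood of [y]
   contains a point of index at least [left_bound y - 1]; [s] is moved up to
   such a point. *)
Lemma foot_exists y : exists s, ~ minimal le y ->
  s <. y /\ (forall z, s <. z -> z <=. y -> foot_cond y z) /\ left_bound y <= S (idx s).
Proof.
  destruct (classic (minimal le y)) as [Hy|Hy]; [exists y; tauto|].
  destruct (near_foot_cond y) as [[Hy' _]|[s0 [Hs0 Hcond]]]; [contradiction|].
  destruct (Nat.eq_dec (left_bound y) 0) as [E|E].
  { exists s0. intros _. split; [exact Hs0|split; [exact Hcond|lia]]. }
  assert (Hnot : ~ bounds_left y (left_bound y - 1))
    by (intro H; apply left_bound_le in H; lia).
  assert (Hz : exists z, s0 <. z /\ z <. y /\ left_bound y - 1 <= idx z).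
  { apply NNPP. intro Hnone. apply Hnot. right. exists s0. split; [exact Hs0|].
    intros z Hs0z _ Hzy. apply NNPP. intro Hge. apply Hnone.
    exists z. split; [exact Hs0z|split; [exact Hzy|lia]]. }
  destruct Hz as [z [Hs0z [Hzy Hidx]]]. exists z. intros _.
  split; [exact Hzy|split; [|lia]].
  intros z' Hzz' Hz'y. apply Hcond; [exact (lt_le_trans _ _ _ Hs0z (proj1 Hzz'))|exact Hz'y].
Qed.

Definition foot (y : T) : T := proj1_sig (constructive_indefinite_description _ (foot_exists y)).

Lemma foot_spec y : ~ minimal le y ->
  foot y <. y /\ (forall z, foot y <. z -> z <=. y -> foot_cond y z) /\
  left_bound y <= S (idx (foot y)).
Proof. exact (proj2_sig (constructive_indefinite_description _ (foot_exists y))). Qed.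

Lemma foot_lt_not_minimal y x : foot y <. x -> x <=. y -> ~ minimal le y.
Proof. intros Hfx Hxy Hy. exact (minimal_not_lt y (foot y) Hy (lt_le_trans _ _ _ Hfx Hxy)). Qed.

Definition piece (y x : T) : Prop := x = y \/ (foot y <. x /\ x <=. y).

Lemma piece_open y : interval_open le (piece y).
Proof.
  assert (Hfoot : forall x, foot y <. x -> x <=. y ->
            exists B, interval_base le B /\ B x /\ forall z, B z -> piece y z).
  { intros x Hfx Hxy. exists (fun z => foot y <. z /\ z <=. y).
    split; [left; now exists (foot y), y|]. split; [split; assumption|].
    intros z Hz; right; exact Hz. }
  intros x [->|[Hfx Hxy]]; [|exact (Hfoot x Hfx Hxy)].
  destruct (classic (minimal le y)) as [Hy|Hy].
  - exists (fun z => z = y). split; [right; now exists y|].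
    split; [reflexivity|]. intros z Hz; left; exact Hz.
  - apply Hfoot; [apply (foot_spec y Hy)|apply le_refl].
Qed.

Lemma piece_sub_W y x : piece y x -> W (idx y) x.
Proof.
  intros [->|[Hfx Hxy]]; [apply W_idx|].
  destruct (foot_spec y (foot_lt_not_minimal y x Hfx Hxy)) as [_ [Hcond _]].
  apply (Hcond x Hfx Hxy).
Qed.

Definition crossing (x y : T) : Prop := foot y <. x /\ x <. y /\ left_bound y <= idx y.

Lemma crossing_high_preds x y :
  crossing x y -> high_preds y (left_bound y) = high_preds x (left_bound y).
Proof.
  intros [Hfx [Hxy Hj]].
  destruct (foot_spec y (foot_lt_not_minimal y x Hfx (proj1 Hxy))) as [Hfy [Hcond _]].
  apply functional_extensionality; intro z; apply propositional_extensionality.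
  split; intros [Hz Hjz]; split; auto.
  - destruct (le_lt_cases_below y z (foot y) Hz Hfy) as [Hzf|Hfz].
    + exact (le_lt_trans _ _ _ Hzf Hfx).
    + destruct (Hcond z Hfz (proj1 Hz)) as [_ [Hlt _]]. specialize (Hlt Hz). lia.
  - exact (lt_le_trans _ _ _ Hz (proj1 Hxy)).
Qed.

Lemma crossing_layer x y : crossing x y -> layer (left_bound y) (high_preds x (left_bound y)) y.
Proof.
  intro H. split; [reflexivity|split; [apply H|apply crossing_high_preds, H]].
Qed.

Lemma crossing_sep x y : crossing x y -> sep (left_bound y) (high_preds x (left_bound y)) y x.
Proof.
  intro H. rewrite <- (crossing_high_preds x y H). destruct H as [Hfx [Hxy Hj]].
  destruct (foot_spec y (foot_lt_not_minimal y x Hfx (proj1 Hxy))) as [_ [Hcond _]].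
  apply (Hcond x Hfx (proj1 Hxy)), Hj.
Qed.

Lemma crossing_injective x y1 y2 :
  crossing x y1 -> crossing x y2 -> left_bound y1 = left_bound y2 -> y1 = y2.
Proof.
  intros H1 H2 E.
  pose proof (crossing_layer x y2 H2) as L2. pose proof (crossing_sep x y2 H2) as S2.
  rewrite <- E in L2, S2.
  exact (sep_disjoint _ _ y1 y2 x (crossing_layer x y1 H1) L2 (crossing_sep x y1 H1) S2).
Qed.

Lemma piece_idx_bounded x : exists M, forall y, piece y x -> idx y <= M.
Proof.
  destruct (idx_bounded_below x) as [K HK].
  destruct (bounded_of_injective T (crossing x) idx left_bound (crossing_injective x) (S (S K)))
    as [B HB].
  exists (idx x + K + B). intros y [->|[Hfx Hxy]]; [lia|].
  destruct (classic (x = y)) as [->|Hne]; [lia|].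
  destruct (foot_spec y (foot_lt_not_minimal y x Hfx Hxy)) as [_ [_ Hlb]].
  assert (Hf : idx (foot y) <= K) by (apply HK, Hfx).
  destruct (Nat.lt_ge_cases (idx y) (left_bound y)) as [Hlt|Hge]; [lia|].
  assert (Hcross : crossing x y) by (split; [exact Hfx|split; [split; assumption|exact Hge]]).
  specialize (HB y Hcross ltac:(lia)). lia.
Qed.

Definition refinement_layer (n : nat) (x : T) : Prop := exists y, idx y = n /\ piece y x.

Lemma point_finite_refinement :
  point_finite_open_refinement (interval_open le) W (fun V => exists n, V = refinement_layer n).
Proof.
  split; [|split; [|split]].
  - intros V [n ->] x [y [Hn Hyx]]. destruct (piece_open y x Hyx) as [B [HB [Bx BU]]].
    exists B. split; [exact HB|split; [exact Bx|]]. intros z Bz. exists y. split; auto.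
  - intro x. exists (refinement_layer (idx x)). split; [eauto|].
    exists x. split; [reflexivity|left; reflexivity].
  - intros V [n ->]. exists n. intros z [y [<- Hyz]]. exact (piece_sub_W y z Hyz).
  - intro x. destruct (piece_idx_bounded x) as [M HM].
    exists (map refinement_layer (seq 0 (S M))).
    intros V [n ->] [y [<- Hyx]]. apply in_map, in_seq. specialize (HM y Hyx). lia.
Qed.

End Cover.
End Tree.

Theorem corollary4p22 (T : Type) (le : T -> T -> Prop) :
  is_tree le ->
  pseudo_suprema_singletons le ->
  collectionwise_hausdorff (interval_open le) ->
  countably_metacompact (interval_open le).
Proof.
  intros Htree _ HC W [HWo HWc].
  exact (ex_intro _ _ (point_finite_refinement T le Htree W HWo HWc HC)).
Qed.
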